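(* Assume the following setting. Let $(E,\mathcal{E},\mu)$ be a non-atomic $\sigma$-finite measure space with $\mu(E)=\infty$. Let $(a_n)_{n\ge1}$ be positive numbers with $a_n\to\infty$ and $a_n=o(n)$. For each $n$ let $P_n$ be a probability measure on $(E,\mathcal{E})$ such that $\mu_n:=(n/a_n)P_n$ satisfies $\mu_n(B)\le\mu_{n+1}(B)$ and $\mu_n(B)\to\mu(B)$ for every $B\in\mathcal{E}$. Let $k_1,k_2\in\mathbb{N}_+$, $f\in L^2(\mu^{k_1})$, $g\in L^2(\mu^{k_2})$ and $0\le l\le\min(k_1,k_2)$. Then for every $n\in\mathbb{N}_+$, $$|F_l^{(n)}(f,g)|\le\|f\|_{L^2(\mu^{k_1})}\,\|g\|_{L^2(\mu^{k_2})}.$$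
   Context: Write $f\otimes g(x_1,\dots,x_{k_1+k_2})=f(x_1,\dots,x_{k_1})g(x_{k_1+1},\dots,x_{k_1+k_2})$. A diagram with $l$ edges is an edge set $\mathcal{N}=\{(j_1,j_1'),\dots,(j_l,j_l')\}$ with $1\le j_s\le k_1$, $k_1+1\le j_s'\le k_1+k_2$, the $j_s$ pairwise distinct and the $j_s'$ pairwise distinct; let $\mathcal{B}(l)$ be the set of all such diagrams, so $|\mathcal{B}(l)|=\frac{k_1!k_2!}{(k_1-l)!(k_2-l)!l!}$. For $\mathcal{N}\in\mathcal{B}(l)$, $(f\otimes g)_{\mathcal{N}}$ is the function of $k_1+k_2-l$ variables obtained from $f\otimes g$ by setting $x_{j_s}=x_{j_s'}$ for $s=1,\dots,l$ (for $l=0$ it is $f\otimes g$). Define $$F_l^{(n)}(f,g)=\Big(\frac{n}{a_n}\Big)^{(k_1+k_2)/2}\int_{E^{k_1+k_2-l}}\frac1{|\mathcal{B}(l)|}\sum_{\mathcal{N}\in\mathcal{B}(l)}(f\otimes g)_{\mathcal{N}}\,dP_n^{k_1+k_2-l}.$$ $\mu^k$, $P_n^k$ denote $k$-fold product measures. *)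

From HB Require Import structures.
From mathcomp Require Import all_boot all_order all_algebra.
From mathcomp Require Import all_classical all_reals all_analysis.
Set Implicit Arguments. Unset Strict Implicit. Unset Printing Implicit Defensive.
Import Order.TTheory GRing.Theory Num.Theory.
Local Open Scope classical_set_scope.
Local Open Scope ring_scope.

(* [nu] is the m-fold product measure [mu^m] on [m.-tuple T] (whose
   sigma-algebra is the product sigma-algebra generated by the coordinates):
   it gives measurable rectangles the product of the measures of the sides
   (convention 0 * oo = 0).  For sigma-finite [mu] such [nu] exists and is
   unique on the product sigma-algebra. *)
Definition is_product_measure d (T : measurableType d) (R : realType)
    (mu : set T -> \bar R) (m : nat) (nu : set (m.-tuple T) -> \bar R) :=
  forall A : 'I_m -> set T, (forall i, measurable (A i)) ->
    nu [set x | forall i, A i (tnth x i)] = (\prod_(i < m) mu (A i))%E.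

Definition nonatomic d (T : measurableType d) (R : realType)
    (mu : set T -> \bar R) :=
  forall A, measurable A -> (0 < mu A)%E ->
    exists2 B, measurable B /\ B `<=` A & (0 < mu B)%E /\ (mu B < mu A)%E.

Definition tens (T : Type) (R : Type) (k1 k2 : nat) (mulR : R -> R -> R)
  (f : k1.-tuple T -> R) (g : k2.-tuple T -> R) (x : (k1 + k2).-tuple T) : R :=
  mulR (f [tuple tnth x (lshift k2 i) | i < k1])
       (g [tuple tnth x (rshift k1 i) | i < k2]).

(* Diagrams with l edges.  An edge (j, j') with j : 'I_k1, j' : 'I_k2 stands
   for the pair of variables (x_(j+1), x_(k1+j'+1)) of the paper. *)
Definition diagrams (k1 k2 l : nat) : {set {set 'I_k1 * 'I_k2}} :=
  [set N : {set 'I_k1 * 'I_k2} | (#|N| == l) &&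
     [forall p in N, forall q in N, ((p.1 == q.1) || (p.2 == q.2)) ==> (p == q)]].

Definition kept (k1 k2 : nat) (N : {set 'I_k1 * 'I_k2}) : {set 'I_(k1 + k2)} :=
  [set i : 'I_(k1 + k2) | ~~ [exists p in N, i == rshift k1 p.2]].

(* representative variable: x_{j'} is identified with x_j *)
Definition rep (k1 k2 : nat) (N : {set 'I_k1 * 'I_k2}) (i : 'I_(k1 + k2)) :
    'I_(k1 + k2) :=
  match [pick p in N | i == rshift k1 p.2] with
  | Some p => lshift k2 p.1
  | None => i
  end.

(* (h)_N : function of the #|kept N| (= k1 + k2 - l) kept variables, the
   kept variables being listed in increasing order of index. *)
Definition contract d (T : measurableType d) (R : Type) (k1 k2 : nat)
    (N : {set 'I_k1 * 'I_k2}) (h : (k1 + k2).-tuple T -> R)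
    (y : #|kept N|.-tuple T) : R :=
  h [tuple nth point (tval y) (index (rep N i) (enum (kept N))) | i < k1 + k2].

(* F_l^(n)(f, g); Pn m is the m-fold product measure P_n^m *)
Definition Fln d (T : measurableType d) (R : realType) (n : nat) (an : R)
    (Pn : forall m : nat, {measure set (m.-tuple T) -> \bar R})
    (k1 k2 l : nat) (f : k1.-tuple T -> R) (g : k2.-tuple T -> R) : \bar R :=
  ((powR (n%:R / an) ((k1 + k2)%:R / 2))%:E *
   ((#|diagrams k1 k2 l|%:R)^-1)%:E *
   \sum_(N in diagrams k1 k2 l)
      \int[Pn #|kept N|]_y (@contract _ _ _ k1 k2 N (tens *%R f g) y)%:E)%E.

From Pilot Require Import Defs.
From HB Require Import structures.
From mathcomp Require Import all_boot all_order all_algebra.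
From mathcomp Require Import all_classical all_reals all_analysis.
From mathcomp Require Import measurable_realfun.
Import Order.TTheory GRing.Theory Num.Theory.
Unset Printing Implicit Defensive.
Local Open Scope classical_set_scope.
Local Open Scope ring_scope.

(* Put c := n / a_n.  Since mu_m increases to mu, c P_n <= mu, hence
   c^k P_n^k <= mu^k on nonnegative functions (Tonelli, by induction on k).
   Along a diagram N, the contracted function is f(y_s1) g(y_s2) for two
   injective selections s1, s2 of the k1 + k2 - l variables, and the image of
   the product probability P_n^(k1+k2-l) under a selection of k variables is
   P_n^k.  Cauchy-Schwarz therefore bounds each contracted integral by
   |f|_(L2(P_n^k1)) |g|_(L2(P_n^k2)) <= c^(-(k1+k2)/2) |f|_(L2(mu^k1))
   |g|_(L2(mu^k2)), and averaging over the diagrams keeps this bound. *)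

Section tuple_rectangle.
Context d (T : measurableType d) (R : realType).

Definition rectangle {k} (A : 'I_k -> set T) : set (k.-tuple T) :=
  [set x | forall i, A i (tnth x i)].

Definition rectangles k : set (set (k.-tuple T)) :=
  [set rectangle A | A in [set A : 'I_k -> set T | forall i, measurable (A i)]].

Lemma measurable_rectangle k (A : 'I_k -> set T) :
  (forall i, measurable (A i)) -> measurable (rectangle A).
Proof.
move=> mA.
have -> : rectangle A = \bigcap_(i in [set: 'I_k]) ((fun x : k.-tuple T => tnth x i) @^-1` A i).
  by apply/seteqP; split => x /= Ax i //; [move=> _; exact: Ax | exact: Ax].
apply: fin_bigcap_measurable; first exact: finite_finset.
by move=> i _; rewrite -[X in measurable X]setTI; exact: measurable_tnth.
Qed.

Lemma tuple_measurableE k : (measurable : set (set (k.-tuple T))) = <<s rectangles k >>.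
Proof.
apply/seteqP; split; last first.
  apply: smallest_sub; first exact: sigma_algebra_measurable.
  by move=> _ [A mA <-]; exact: measurable_rectangle.
apply: smallest_sub; first exact: smallest_sigma_algebra.
case: k => [|k] X; first by rewrite big_ord0.
rewrite -bigcup_mkord_ord => -[i _ [B mB <-]].
apply: sub_sigma_algebra.
exists (fun j => if j == inord i then B else setT); first by move=> j; case: ifP.
apply/seteqP; split => x /=; last by move=> [_ Bx] j; case: ifPn => // /eqP ->.
by move=> Ax; split => //; have := Ax (inord i); rewrite eqxx.
Qed.

Lemma rectangles_setI_closed k : setI_closed (rectangles k).
Proof.
move=> _ _ [A mA <-] [B mB <-].
exists (fun i => A i `&` B i); first by move=> i; exact: measurableI.
by apply/seteqP; split => x /= => [ABx|[Ax Bx] i]; [split => i; case: (ABx i)|].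
Qed.

Lemma bigcup_rectangle_const k (F : nat -> set T) :
  nondecreasing_seq F -> \bigcup_n F n = setT ->
  \bigcup_n rectangle (fun _ : 'I_k => F n) = setT.
Proof.
move=> ndF FT; apply/seteqP; split => // x _.
suff [n Fn] : exists n, forall y, y \in tval x -> F n y.
  by exists n => // i; apply/Fn/mem_tnth.
elim: (tval x) => [|y s [n Fn]]; first by exists 0%N.
have [n' _ Fy] : (\bigcup_n F n) y by rewrite FT.
exists (maxn n n') => z; rewrite inE => /orP[/eqP ->|zs].
  by move: Fy; apply/subsetPset/ndF/leq_maxr.
by move: (Fn z zs); apply/subsetPset/ndF/leq_maxl.
Qed.

Local Open Scope ereal_scope.

Lemma product_measure_rectangle_lty (m : {measure set T -> \bar R}) k
    (nu : {measure set (k.-tuple T) -> \bar R}) (A : 'I_k -> set T) :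
  is_product_measure m nu -> (forall i, measurable (A i)) ->
  (forall i, m (A i) < +oo) -> nu (rectangle A) < +oo.
Proof.
move=> nuE mA Aoo; rewrite [nu _]nuE // -ge0_fin_numE ?prode_ge0 //.
by apply: prode_fin_num => i _; rewrite ge0_fin_numE.
Qed.

Section product_measure_of_sigma_finite.
Variable m : {measure set T -> \bar R}.
Hypothesis m_sigma_finite : sigma_finite setT m.

Lemma product_measure_sigma_finite k (nu : {measure set (k.-tuple T) -> \bar R}) :
  is_product_measure m nu -> sigma_finite setT nu.
Proof.
have /sigma_finiteP [F [FT ndF mF]] := m_sigma_finite.
move=> nuE; exists (fun n => rectangle (fun _ : 'I_k => F n)).
  by rewrite bigcup_rectangle_const.
move=> n; split; first by apply: measurable_rectangle => i; case: (mF n).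
by apply: product_measure_rectangle_lty nuE _ _ => i; case: (mF n).
Qed.

Lemma product_measure_unique k (nu nu' : {measure set (k.-tuple T) -> \bar R}) :
  is_product_measure m nu -> is_product_measure m nu' ->
  forall X, measurable X -> nu X = nu' X.
Proof.
have /sigma_finiteP [F [FT ndF mF]] := m_sigma_finite.
move=> nuE nu'E X mX.
apply: (measure_unique (rectangles k) (fun n => rectangle (fun _ : 'I_k => F n))).
- exact: tuple_measurableE.
- exact: rectangles_setI_closed.
- by move=> n; exists (fun _ => F n) => // i; case: (mF n).
- by rewrite bigcup_rectangle_const.
- by move=> _ [A mA <-]; rewrite [nu _]nuE // [nu' _]nu'E.
- by move=> n; apply: product_measure_rectangle_lty nuE _ _ => i; case: (mF n).
- exact: mX.
Qed.

End product_measure_of_sigma_finite.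
End tuple_rectangle.
Arguments rectangle {d T k}.
Arguments product_measure_sigma_finite {d T R m} _ {k nu}.
Arguments product_measure_unique {d T R m} _ {k nu nu'}.

Section tuple_tonelli.
Context d (T : measurableType d) (R : realType).
Local Open Scope ereal_scope.
Variable m : {measure set T -> \bar R}.
Hypothesis m_sigma_finite : sigma_finite setT m.
Variables (k : nat) (nu : {measure set (k.-tuple T) -> \bar R})
  (nu1 : {measure set (k.+1.-tuple T) -> \bar R}).
Hypotheses (nuE : is_product_measure m nu) (nu1E : is_product_measure m nu1).

(* Copies of [m] and [nu] carrying the sigma-finite structure Tonelli needs. *)
Definition sigma_finite_m : set T -> \bar R := m.
HB.instance Definition _ := Measure.on sigma_finite_m.
HB.instance Definition _ :=
  Measure_isSigmaFinite.Build _ _ _ sigma_finite_m m_sigma_finite.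

Definition sigma_finite_nu : set (k.-tuple T) -> \bar R := nu.
HB.instance Definition _ := Measure.on sigma_finite_nu.
HB.instance Definition _ := Measure_isSigmaFinite.Build _ _ _ sigma_finite_nu
  (product_measure_sigma_finite m_sigma_finite nuE).

Definition cons_tuple (p : T * k.-tuple T) : k.+1.-tuple T := [tuple of p.1 :: p.2].

Lemma measurable_cons_tuple : measurable_fun setT cons_tuple.
Proof. exact: measurable_cons measurable_fst measurable_snd. Qed.

Lemma pushforward_cons_tuple_product_measure :
  is_product_measure m (pushforward (sigma_finite_m \x sigma_finite_nu) cons_tuple).
Proof.
move=> A mA; rewrite /pushforward.
have -> : cons_tuple @^-1` rectangle A =
    A ord0 `*` rectangle (fun i : 'I_k => A (lift ord0 i)).
  apply/seteqP; split => -[x t] /=.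
    move=> Axt; split; first by have := Axt ord0; rewrite tnth0.
    by move=> i; have := Axt (lift ord0 i); rewrite tnthS.
  by move=> [Ax At] i; case: (unliftP ord0 i) => [j ->|->]; rewrite ?tnthS ?tnth0.
rewrite product_measure1E //; last exact: measurable_rectangle.
by rewrite /sigma_finite_nu nuE // big_ord_recl.
Qed.

Lemma integral_product_measureS (phi : k.+1.-tuple T -> \bar R) :
  measurable_fun setT phi -> (forall x, 0 <= phi x) ->
  \int[nu1]_y phi y = \int[m]_x \int[nu]_t phi [tuple of x :: t].
Proof.
move=> mphi phi0.
rewrite (eq_measure_integral (pushforward (sigma_finite_m \x sigma_finite_nu) cons_tuple)).
- exact: measurable_cons_tuple.
- move=> mcons; rewrite ge0_integral_pushforward // preimage_setT fubini_tonelli1 //.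
  + exact: measurableT_comp mphi measurable_cons_tuple.
  + by move=> ?; exact: phi0.
- move=> ? A mA _; apply: (product_measure_unique m_sigma_finite nu1E) mA.
  exact: pushforward_cons_tuple_product_measure.
Qed.

Lemma measurable_fun_integral_cons_tuple (phi : k.+1.-tuple T -> \bar R) :
  measurable_fun setT phi -> (forall x, 0 <= phi x) ->
  measurable_fun setT (fun x => \int[nu]_t phi [tuple of x :: t]).
Proof.
move=> mphi phi0.
apply: (@measurable_fun_fubini_tonelli_F _ _ _ _ _ sigma_finite_nu (phi \o cons_tuple)).
- exact: measurableT_comp mphi measurable_cons_tuple.
- by move=> ?; exact: phi0.
Qed.

End tuple_tonelli.
Arguments integral_product_measureS {d T R m} _ {k nu nu1} _ _ {phi}.
Arguments measurable_fun_integral_cons_tuple {d T R m} _ {k nu} _ {phi}.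

Section le_integral_product_measure.
Context d (T : measurableType d) (R : realType).
Local Open Scope ereal_scope.
Variables m1 m2 : {measure set T -> \bar R}.
Hypotheses (m1_sigma_finite : sigma_finite setT m1)
  (m2_sigma_finite : sigma_finite setT m2).
Hypothesis le_m1_m2 : forall A, measurable A -> m1 A <= m2 A.
Variables nu1 nu2 : forall k, {measure set (k.-tuple T) -> \bar R}.
Hypotheses (nu1E : forall k, is_product_measure m1 (nu1 k))
  (nu2E : forall k, is_product_measure m2 (nu2 k)).

Lemma le_integral_product_measure k (phi : k.-tuple T -> \bar R) :
  measurable_fun setT phi -> (forall x, 0 <= phi x) ->
  \int[nu1 k]_y phi y <= \int[nu2 k]_y phi y.
Proof.
elim: k phi => [|k IHk] phi mphi phi0.
  (* on 0-tuples, being a product measure does not depend on the factor *)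
  have nu20E : is_product_measure m1 (nu2 0) by move=> A mA; rewrite nu2E ?big_ord0.
  rewrite (eq_measure_integral (nu2 0)) // => A mA _.
  exact: (product_measure_unique m1_sigma_finite (nu1E 0) nu20E) mA.
have mphi_cons x : measurable_fun setT (fun t : k.-tuple T => phi [tuple of x :: t]).
  by apply: measurableT_comp mphi _; exact: measurable_cons.
rewrite (integral_product_measureS m1_sigma_finite (nu1E k)) //.
rewrite (integral_product_measureS m2_sigma_finite (nu2E k)) //.
apply: (@le_trans _ _ (\int[m1]_x \int[nu2 k]_t phi [tuple of x :: t])).
  apply: ge0_le_integral => //.
  - by move=> x _; exact: integral_ge0.
  - exact: (measurable_fun_integral_cons_tuple m1_sigma_finite (nu1E k)) mphi phi0.
  - exact: (measurable_fun_integral_cons_tuple m2_sigma_finite (nu2E k)) mphi phi0.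
  - by move=> x _; exact: IHk (mphi_cons x) (fun t => phi0 _).
apply: ge0_le_measure_integral => //.
- by move=> x; exact: integral_ge0.
- exact: (measurable_fun_integral_cons_tuple m2_sigma_finite (nu2E k)) mphi phi0.
Qed.

End le_integral_product_measure.
Arguments le_integral_product_measure {d T R m1 m2} _ _ _ {nu1 nu2} _ _ {k phi}.

Section select_tuple.
Context d (T : measurableType d) (R : realType).
Local Open Scope ereal_scope.

Definition select_tuple {k M} (s : 'I_k -> 'I_M) (y : M.-tuple T) : k.-tuple T :=
  [tuple tnth y (s i) | i < k].

Lemma measurable_select_tuple k M (s : 'I_k -> 'I_M) :
  measurable_fun setT (select_tuple s).
Proof.
apply/measurable_fun_tnthP => i.
rewrite (_ : _ \o _ = fun y : M.-tuple T => tnth y (s i)); first exact: measurable_tnth.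
by apply/funext => y /=; rewrite tnth_mktuple.
Qed.

Variable P : probability T R.

Lemma pushforward_select_tuple_product_measure k M (s : 'I_k -> 'I_M)
    (nu : {measure set (M.-tuple T) -> \bar R}) :
  injective s -> is_product_measure P nu ->
  is_product_measure P (pushforward nu (select_tuple s)).
Proof.
move=> s_inj nuE A mA; rewrite /pushforward.
pose B j := if [pick i | s i == j] is Some i then A i else setT.
have Bs i : B (s i) = A i.
  by rewrite /B; case: pickP => [i' /eqP /s_inj -> //|/(_ i)]; rewrite eqxx.
have mB j : measurable (B j) by rewrite /B; case: pickP.
have -> : select_tuple s @^-1` rectangle A = rectangle B.
  apply/seteqP; split => y /= Ay => [j|i]; last by rewrite tnth_mktuple -Bs.
  by rewrite /B; case: pickP => // i /eqP <-; have := Ay i; rewrite tnth_mktuple.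
rewrite [nu _]nuE // (bigID (mem (s @: 'I_k)%SET)) /=.
rewrite [X in _ * X]big1 ?mule1; last first.
  move=> j /imsetP sNj; rewrite /B; case: pickP => [i /eqP si|_]; last exact: probability_setT.
  by case: sNj; exists i.
rewrite big_imset /=; last by move=> x y _ _; exact: s_inj.
by apply: eq_bigr => i _; rewrite Bs.
Qed.

Lemma integral_select_tuple k M (s : 'I_k -> 'I_M)
    (nuM : {measure set (M.-tuple T) -> \bar R}) (nuk : {measure set (k.-tuple T) -> \bar R})
    (phi : k.-tuple T -> \bar R) :
  injective s -> is_product_measure P nuM -> is_product_measure P nuk ->
  measurable_fun setT phi -> (forall x, 0 <= phi x) ->
  \int[nuM]_y phi (select_tuple s y) = \int[nuk]_x phi x.
Proof.
move=> s_inj nuME nukE mphi phi0.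
rewrite [RHS](eq_measure_integral (pushforward nuM (select_tuple s))).
- exact: measurable_select_tuple.
- by move=> ?; rewrite [RHS]ge0_integral_pushforward ?preimage_setT // => y _; exact: phi0.
- move=> ? A mA _; apply: (product_measure_unique (sigma_finiteT P) nukE) mA.
  exact: pushforward_select_tuple_product_measure.
Qed.

End select_tuple.
Arguments select_tuple {d T k M} s y.
Arguments measurable_select_tuple {d T k M} s.
Arguments integral_select_tuple {d T R P k M s nuM nuk} phi.

Section diagram_contraction.
Variables (k1 k2 : nat) (N : {set 'I_k1 * 'I_k2}).

Lemma lshift_neq_rshift (i : 'I_k1) (j : 'I_k2) : lshift k2 i != rshift k1 j.
Proof. by rewrite -val_eqE /= neq_ltn ltn_addr. Qed.

Lemma rep_kept i : rep N i \in kept N.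
Proof.
rewrite /rep inE; case: pickP => [p /andP[pN _]|Nr].
  by apply/existsP => -[q /andP[_ /eqP/eqP]]; rewrite (negPf (lshift_neq_rshift _ _)).
by apply/existsP => -[q /andP[qN /eqP iq]]; have := Nr q; rewrite qN iq eqxx.
Qed.

Lemma index_rep_lt i : (index (rep N i) (enum (kept N)) < #|kept N|)%N.
Proof. by rewrite cardE index_mem mem_enum rep_kept. Qed.

Definition contract_index i : 'I_#|kept N| := Ordinal (index_rep_lt i).

Definition left_index (i : 'I_k1) := contract_index (lshift k2 i).
Definition right_index (j : 'I_k2) := contract_index (rshift k1 j).

Lemma contract_index_inj i j : contract_index i = contract_index j -> rep N i = rep N j.
Proof.
move/(congr1 val) => /= ij.
have rep_enum h : rep N h \in enum (kept N) by rewrite mem_enum rep_kept.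
by rewrite -(nth_index (rep N i) (rep_enum i)) ij nth_index.
Qed.

Lemma rep_lshift i : rep N (lshift k2 i) = lshift k2 i.
Proof.
rewrite /rep; case: pickP => // p /andP[_ /eqP/eqP].
by rewrite (negPf (lshift_neq_rshift _ _)).
Qed.

Lemma left_index_inj : injective left_index.
Proof. by move=> i j /contract_index_inj; rewrite !rep_lshift => /lshift_inj. Qed.

Lemma contract_tensE d (T : measurableType d) (R : realType)
    (f : k1.-tuple T -> R) (g : k2.-tuple T -> R) y :
  @Defs.contract _ T R k1 k2 N (tens *%R f g) y =
    f (select_tuple left_index y) * g (select_tuple right_index y).
Proof.
rewrite /Defs.contract /tens; congr (f _ * g _); apply: eq_from_tnth => i;
  by rewrite !tnth_mktuple (tnth_nth point).
Qed.

Variable l : nat.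
Hypothesis N_diagram : N \in diagrams k1 k2 l.

Lemma diagram_fst_inj : {in N &, injective fst}.
Proof.
move=> p q pN qN pq; move: N_diagram; rewrite inE => /andP[_ /forall_inP Nd].
by have /forall_inP/(_ q qN) := Nd p pN; rewrite pq eqxx => /eqP.
Qed.

Lemma right_index_inj : injective right_index.
Proof.
move=> i j /contract_index_inj; rewrite /rep.
case: pickP => [p /andP[pN /eqP ip]|Ni]; case: pickP => [q /andP[qN /eqP jq]|Nj].
- move/lshift_inj => pq; apply: (@rshift_inj k1 k2).
  by rewrite ip jq (diagram_fst_inj _ _ pN qN pq).
- by move/eqP; rewrite (negPf (lshift_neq_rshift _ _)).
- by move/esym/eqP; rewrite (negPf (lshift_neq_rshift _ _)).
- exact: rshift_inj.
Qed.

End diagram_contraction.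
Arguments left_index_inj {k1 k2 N}.
Arguments right_index_inj {k1 k2 N l}.

Section L2_bounds.
Context d (T : measurableType d) (R : realType).
Local Open Scope ereal_scope.

Lemma Lnorm_EFinE {d'} {S : measurableType d'} (nu : {measure set S -> \bar R})
    (p : R) (h : S -> R) :
  Lnorm nu p%:E (EFin \o h) = (\int[nu]_x (`|h x| `^ p)%:E) `^ p^-1.
Proof. by rewrite unlock. Qed.

Lemma measurable_powR_norm {d'} {S : measurableType d'} (h : S -> R) (p : R) :
  measurable_fun setT h -> measurable_fun setT (fun x => (`|h x| `^ p)%:E).
Proof.
move=> mh; apply/measurable_EFinP.
exact: measurableT_comp (measurable_powR p) (measurableT_comp (@normr_measurable R setT) mh).
Qed.

Lemma abse_integral_mul_le_Lnorm2 {d'} {S : measurableType d'}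
    (nu : {measure set S -> \bar R}) {F G : S -> R} :
  measurable_fun setT F -> measurable_fun setT G ->
  `| \int[nu]_x (F x * G x)%:E | <=
    Lnorm nu 2%:E (EFin \o F) * Lnorm nu 2%:E (EFin \o G).
Proof.
move=> mF mG; apply: le_trans (le_abse_integral _ _ _) _ => //.
  by apply/measurable_EFinP; exact: measurable_funM.
rewrite -Lnorm1; apply: hoelder => //.
by rewrite -div1r -splitr.
Qed.

Lemma Lnorm_select_tuple {P : probability T R} {k M} {s : 'I_k -> 'I_M}
    {nuM : {measure set (M.-tuple T) -> \bar R}} {nuk : {measure set (k.-tuple T) -> \bar R}}
    (p : R) {h : k.-tuple T -> R} :
  injective s -> is_product_measure P nuM -> is_product_measure P nuk ->
  measurable_fun setT h ->
  Lnorm nuM p%:E (EFin \o (h \o select_tuple s)) = Lnorm nuk p%:E (EFin \o h).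
Proof.
move=> s_inj nuME nukE mh; rewrite !Lnorm_EFinE.
congr (_ `^ _); apply: (integral_select_tuple (P := P) (fun x => (`|h x| `^ p)%:E)) => //.
exact: measurable_powR_norm.
Qed.

Lemma is_product_measure_mscale {m : {measure set T -> \bar R}} (c : {nonneg R}) {k}
    {nu : {measure set (k.-tuple T) -> \bar R}} :
  is_product_measure m nu ->
  is_product_measure (mscale c m) (mscale (NngNum (exprn_ge0 k (ge0 c))) nu).
Proof.
move=> nuE A mA; rewrite /mscale /= nuE // big_split /=.
by rewrite prodEFin prodr_const card_ord.
Qed.

Section scaled_probability.
Variable mu : {measure set T -> \bar R}.
Hypothesis mu_sigma_finite : sigma_finite setT mu.
Variables (P : probability T R) (c : R).
Hypothesis c_gt0 : (0 < c)%R.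
Hypothesis le_cP_mu : forall A, measurable A -> c%:E * P A <= mu A.
Variables (P_pow mu_pow : forall k, {measure set (k.-tuple T) -> \bar R}).
Hypotheses (P_powE : forall k, is_product_measure P (P_pow k))
  (mu_powE : forall k, is_product_measure mu (mu_pow k)).

Lemma le_integral_scaled_product k (phi : k.-tuple T -> \bar R) :
  measurable_fun setT phi -> (forall x, 0 <= phi x) ->
  (c ^+ k)%:E * \int[P_pow k]_x phi x <= \int[mu_pow k]_x phi x.
Proof.
move=> mphi phi0; pose c' := NngNum (ltW c_gt0).
have := le_integral_product_measure (sigma_finiteT (mscale c' P)) mu_sigma_finite
  le_cP_mu (fun k => is_product_measure_mscale c' (P_powE k)) mu_powE mphi phi0.
by rewrite ge0_integral_mscale.
Qed.

Lemma le_Lnorm2_scaled_product k (h : k.-tuple T -> R) : measurable_fun setT h ->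
  (c `^ (k%:R / 2))%:E * Lnorm (P_pow k) 2%:E (EFin \o h) <=
  Lnorm (mu_pow k) 2%:E (EFin \o h).
Proof.
move=> mh; rewrite !Lnorm_EFinE.
have -> : (c `^ (k%:R / 2) = (c ^+ k) `^ 2^-1)%R.
  by rewrite powRrM powR_mulrn // ltW.
have int_ge0 (nu : {measure set (k.-tuple T) -> \bar R}) :
    0 <= \int[nu]_x (`|h x| `^ 2)%:E.
  by apply: integral_ge0 => x _; rewrite lee_fin powR_ge0.
have ck_ge0 : (0 <= c ^+ k)%R by rewrite exprn_ge0 // ltW.
rewrite -poweR_EFin -poweRM ?lee_fin ?int_ge0 //.
apply: gt0_ler_poweR.
- by rewrite invr_ge0.
- by rewrite in_itv /= leey andbT mule_ge0 ?lee_fin ?int_ge0.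
- by rewrite in_itv /= leey andbT int_ge0.
apply: le_integral_scaled_product; first exact: measurable_powR_norm.
by move=> x; rewrite lee_fin powR_ge0.
Qed.

Lemma contracted_integral_le k1 k2 M (s1 : 'I_k1 -> 'I_M) (s2 : 'I_k2 -> 'I_M)
    (f : k1.-tuple T -> R) (g : k2.-tuple T -> R) :
  injective s1 -> injective s2 -> measurable_fun setT f -> measurable_fun setT g ->
  (c `^ ((k1 + k2)%:R / 2))%:E *
    `| \int[P_pow M]_y (f (select_tuple s1 y) * g (select_tuple s2 y))%:E |
  <= Lnorm (mu_pow k1) 2%:E (EFin \o f) * Lnorm (mu_pow k2) 2%:E (EFin \o g).
Proof.
move=> s1_inj s2_inj mf mg.
have cauchy_schwarz := abse_integral_mul_le_Lnorm2 (P_pow M)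
  (measurableT_comp mf (measurable_select_tuple s1))
  (measurableT_comp mg (measurable_select_tuple s2)).
rewrite (Lnorm_select_tuple 2 s1_inj (P_powE M) (P_powE k1) mf) in cauchy_schwarz.
rewrite (Lnorm_select_tuple 2 s2_inj (P_powE M) (P_powE k2) mg) in cauchy_schwarz.
rewrite natrD mulrDl powRD; last by apply/implyP => _; rewrite gt_eqF.
rewrite EFinM; apply: le_trans (lee_wpmul2l _ cauchy_schwarz) _.
  by rewrite lee_fin mulr_ge0 ?powR_ge0.
rewrite muleACA; apply: lee_pmul.
- by rewrite mule_ge0 ?Lnorm_ge0 // lee_fin powR_ge0.
- by rewrite mule_ge0 ?Lnorm_ge0 // lee_fin powR_ge0.
- exact: le_Lnorm2_scaled_product mf.
- exact: le_Lnorm2_scaled_product mg.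
Qed.

End scaled_probability.
End L2_bounds.
Arguments contracted_integral_le {d T R mu} _ {P c} _ _ {P_pow mu_pow} _ _ {k1 k2 M s1 s2 f g}.

Section ereal_bounds.
Context (R : realType).
Local Open Scope ereal_scope.

Lemma abse_scaled_mean_le (I : finType) (S : {set I}) (A : R)
    (u : I -> \bar R) (K : \bar R) :
  (0 <= A)%R -> 0 <= K -> (forall i, i \in S -> A%:E * `|u i| <= K) ->
  `| A%:E * (#|S|%:R^-1)%:E * \sum_(i in S) u i | <= K.
Proof.
move=> A0 K0 uK; have [S0|S0] := eqVneq #|S| 0%N.
  by rewrite S0 invr0 mule0 mul0e abse0.
case: K K0 uK => [r r0 uK|_ _|//]; last exact: leey.
rewrite abseM gee0_abs; last by rewrite mule_ge0 // lee_fin invr_ge0.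
rewrite muleAC.
apply: (@le_trans _ _ ((A%:E * \sum_(i in S) `|u i|) * (#|S|%:R^-1)%:E)).
  apply: lee_wpmul2r; first by rewrite lee_fin invr_ge0.
  apply: lee_wpmul2l; first by rewrite lee_fin.
  exact: lee_abs_sum.
apply: (@le_trans _ _ ((\sum_(i in S) r%:E) * (#|S|%:R^-1)%:E)).
  apply: lee_wpmul2r; first by rewrite lee_fin invr_ge0.
  rewrite ge0_sume_distrr; last by move=> i _; exact: abse_ge0.
  exact: lee_sum.
rewrite sumEFin sumr_const -EFinM lee_fin -[(r *+ _)%R]mulr_natr -mulrA mulfV ?mulr1 //.
by rewrite pnatr_eq0.
Qed.

Lemma nondecreasing_le_lim (u : nat -> \bar R) (l : \bar R) n :
  (forall m, (n <= m)%N -> u m <= u m.+1) -> u @ \oo --> l -> u n <= l.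
Proof.
move=> ndu ul.
have le_un m : (n <= m)%N -> u n <= u m.
  elim: m => [|m IHm]; first by rewrite leqn0 => /eqP ->.
  rewrite leq_eqVlt => /orP[/eqP <-//|nm].
  exact: le_trans (IHm nm) (ndu _ nm).
rewrite -(cvg_lim _ ul) //; apply: lime_ge; first by apply/cvg_ex; exists l.
by near=> m; apply: le_un; near: m; exact: nbhs_infty_ge.
Unshelve. all: by end_near.
Qed.

End ereal_bounds.

Theorem lemma5 (R : realType) (d : measure_display) (E : measurableType d)
  (mu : {measure set E -> \bar R})
  (a : nat -> R) (P : nat -> probability E R)
  (mu_pow : forall m : nat, {measure set (m.-tuple E) -> \bar R})
  (P_pow : nat -> forall m : nat, {measure set (m.-tuple E) -> \bar R})
  (k1 k2 l : nat) (f : k1.-tuple E -> R) (g : k2.-tuple E -> R) (n : nat) :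
  nonatomic mu ->
  sigma_finite setT mu ->
  mu setT = +oo%E ->
  (forall m, (0 < m)%N -> 0 < a m) ->
  a @ \oo --> +oo ->
  (fun m => a m / m%:R) @ \oo --> 0 ->
  (forall m B, (0 < m)%N -> measurable B ->
     ((m%:R / a m)%:E * P m B <= (m.+1%:R / a m.+1)%:E * P m.+1 B)%E) ->
  (forall B, measurable B ->
     (fun m => ((m%:R / a m)%:E * P m B)%E) @ \oo --> mu B) ->
  (forall m, is_product_measure mu (mu_pow m)) ->
  (forall j m, is_product_measure (P j) (P_pow j m)) ->
  (0 < k1)%N -> (0 < k2)%N -> (l <= minn k1 k2)%N ->
  measurable_fun setT f ->
  (Lnorm (mu_pow k1) 2%:E (EFin \o f) < +oo)%E ->
  measurable_fun setT g ->
  (Lnorm (mu_pow k2) 2%:E (EFin \o g) < +oo)%E ->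
  (0 < n)%N ->
  (`| Fln n (a n) (P_pow n) l f g | <=
     Lnorm (mu_pow k1) 2%:E (EFin \o f) * Lnorm (mu_pow k2) 2%:E (EFin \o g))%E.
Proof.
move=> _ mu_sigma_finite _ a_gt0 _ _ mu_nd mu_lim mu_powE P_powE _ _ _ mf _ mg _ n_gt0.
have c_gt0 : (0 < n%:R / a n)%R by rewrite divr_gt0 ?ltr0n ?a_gt0.
have le_cP_mu A : measurable A -> ((n%:R / a n)%:E * P n A <= mu A)%E.
  move=> mA; apply: nondecreasing_le_lim (mu_lim A mA) => m nm.
  exact: mu_nd (leq_trans n_gt0 nm) mA.
apply: abse_scaled_mean_le; rewrite ?powR_ge0 ?mule_ge0 ?Lnorm_ge0 // => N N_diagram.
under eq_integral do rewrite contract_tensE.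
exact: (contracted_integral_le (P := P n) mu_sigma_finite c_gt0 le_cP_mu (P_powE n) mu_powE
  left_index_inj (right_index_inj N_diagram) mf mg).
Qed.
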